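(* There is a constant $c$ such that for every Boolean circuit $C$ with input nodes $\mathrm{in}_1,\dots,\mathrm{in}_n$ whose gates are only $\neg$-gates, $\vee$-gates and $\wedge$-gates, there exists an instruction sequence $X\in\mathrm{IS}_{br}$ in which the basic instruction $\mathrm{out}.\mathrm{set}{:}F$ does not occur (in any plain, positive test or negative test instruction) such that $X$ computes the $n$-ary Boolean function induced by $C$ and $|X|\le c\cdot(\mathrm{size}(C)+1)$.
   Context: $\mathbb B=\{T,F\}$. A Boolean circuit with input nodes $\mathrm{in}_1,\dots,\mathrm{in}_n$ is a finite directed acyclic graph whose non-input nodes (gates) are $\neg$-gates with one predecessor or $\vee$-/$\wedge$-gates with two predecessors, with one designated output node; the induced function $\mathbb B^n\to\mathbb B$ is the value of the output node when $\mathrm{in}_j$ carries $b_j$. Its size is its number of nodes. A primitive instruction is one of: a plain basic instruction $a$, a positive test instruction $+a$, a negative test instruction $-a$ (for a basic instruction $a$), a forward jump instruction $\#l$ ($l\in\mathbb N$), or the termination instruction $!$. An instruction sequence is a finite nonempty sequence $X=u_1;\dots;u_k$ of primitive instructions; its length is $|X|=k$. Basic instructions have the form $f.m$ where the focus $f$ is one of $\mathrm{in}{:}i$, $\mathrm{aux}{:}i$ ($i\ge 1$) or $\mathrm{out}$, each naming a Boolean register, and the method $m$ is one of $\mathrm{set}{:}T$, $\mathrm{set}{:}F$, $\mathrm{get}$. Executing $f.\mathrm{set}{:}b$ sets register $f$ to $b$ and yields reply $b$; executing $f.\mathrm{get}$ leaves the register unchanged and yields its content as reply. Execution of $X=u_1;\dots;u_k$: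 a counter starts at $1$. If the counter exceeds $k$, execution deadlocks. At position $i$: if $u_i=!$, execution terminates; if $u_i=\#l$, execution deadlocks if $l=0$ and otherwise the counter becomes $i+l$; if $u_i$ is $a$, $+a$ or $-a$, the basic instruction $a$ is executed yielding reply $r$, and the counter becomes $i+1$ for $u_i=a$; for $u_i=+a$ it becomes $i+1$ if $r=T$ and $i+2$ if $r=F$; for $u_i=-a$ it becomes $i+1$ if $r=F$ and $i+2$ if $r=T$. $\mathrm{IS}_{br}$ is the set of instruction sequences in which every basic instruction occurring belongs to $\{f.\mathrm{get}: f=\mathrm{in}{:}i \text{ or } f=\mathrm{aux}{:}i\}\cup\{f.\mathrm{set}{:}b: f=\mathrm{aux}{:}i \text{ or } f=\mathrm{out},\ b\in\mathbb B\}$. $X\in\mathrm{IS}_{br}$ computes $f:\mathbb B^n\to\mathbb B$ if for every $(b_1,\dots,b_n)\in\mathbb B^n$: when $X$ is executed with register $\mathrm{in}{:}j$ initialised to $b_j$ ($j\le n$) and all registers $\mathrm{aux}{:}i$ and $\mathrm{out}$ initialised to $F$, execution terminates (does not deadlock) without ever executing a basic instruction with focus $\mathrm{in}{:}j$ for $j>n$, and at termination register $\mathrm{out}$ contains $f(b_1,\dots,b_n)$. *)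

From mathcomp Require Import all_boot.
Set Implicit Arguments. Unset Strict Implicit. Unset Printing Implicit Defensive.

(* Nodes are numbered 0,1,2,...: node j-1 (j = 1..n) is the input node in_j,
   node n+k is the k-th gate (gates listed in a topological order). *)
Inductive gate : Type :=
  | GNot of nat
  | GOr of nat & nat
  | GAnd of nat & nat.

Record circuit : Type := Circuit { gates : seq gate; out_node : nat }.

Definition gate_wf (bound : nat) (g : gate) : bool :=
  match g with
  | GNot a => a < bound
  | GOr a b => (a < bound) && (b < bound)
  | GAnd a b => (a < bound) && (b < bound)
  end.

Definition circuit_wf (n : nat) (C : circuit) : bool :=
  all (fun k => gate_wf (n + k) (nth (GNot 0) (gates C) k)) (iota 0 (size (gates C)))
  && (out_node C < n + size (gates C)).

Definition circuit_size (n : nat) (C : circuit) : nat := n + size (gates C).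

Definition eval_gate (vals : seq bool) (g : gate) : bool :=
  match g with
  | GNot a => ~~ nth false vals a
  | GOr a b => nth false vals a || nth false vals b
  | GAnd a b => nth false vals a && nth false vals b
  end.

Definition node_values (inp : seq bool) (gs : seq gate) : seq bool :=
  foldl (fun vals g => rcons vals (eval_gate vals g)) inp gs.

Definition circuit_fun (n : nat) (C : circuit) (bs : n.-tuple bool) : bool :=
  nth false (node_values bs (gates C)) (out_node C).

Inductive focus : Type :=
  | FIn of nat
  | FAux of nat
  | FOut.

Inductive method : Type :=
  | MSet of bool
  | MGet.

Record basic := Basic { bfocus : focus; bmethod : method }.

Inductive prim : Type :=
  | Plain of basic
  | PTest of basic
  | NTest of basic
  | Jump of nat
  | Term.

Definition instr_seq := seq prim.

Definition basic_of (u : prim) : option basic :=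
  match u with
  | Plain a | PTest a | NTest a => Some a
  | _ => None
  end.

Definition basic_br (a : basic) : Prop :=
  match bfocus a, bmethod a with
  | FIn i, MGet => 1 <= i
  | FAux i, MGet => 1 <= i
  | FAux i, MSet _ => 1 <= i
  | FOut, MSet _ => True
  | _, _ => False
  end.

Definition IS_br (X : instr_seq) : Prop :=
  forall i, i < size X -> forall a, basic_of (nth Term X i) = Some a -> basic_br a.

Definition occurs (a : basic) (X : instr_seq) : Prop :=
  exists i, i < size X /\ basic_of (nth Term X i) = Some a.

Definition out_setF : basic := Basic FOut (MSet false).

Definition regs := focus -> bool.

Definition focus_eqb (f g : focus) : bool :=
  match f, g with
  | FIn i, FIn j => i == j
  | FAux i, FAux j => i == j
  | FOut, FOut => true
  | _, _ => false
  end.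

Definition exec_basic (a : basic) (s : regs) : bool * regs :=
  match bmethod a with
  | MSet b => (b, fun f => if focus_eqb f (bfocus a) then b else s f)
  | MGet => (s (bfocus a), s)
  end.

Definition focus_ok (n : nat) (a : basic) : bool :=
  match bfocus a with FIn j => j <= n | _ => true end.

(* terminates n X pc s s' : execution of X from counter pc (1-based) in
   register state s terminates, with final state s', without deadlocking and
   without executing a basic instruction with focus in:j for j > n. *)
Inductive terminates (n : nat) (X : instr_seq) : nat -> regs -> regs -> Prop :=
  | T_term pc s :
      0 < pc <= size X -> nth Term X pc.-1 = Term -> terminates n X pc s s
  | T_jump pc l s s' :
      0 < pc <= size X -> nth Term X pc.-1 = Jump l -> 0 < l ->
      terminates n X (pc + l) s s' -> terminates n X pc s s'
  | T_plain pc a s s' :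
      0 < pc <= size X -> nth Term X pc.-1 = Plain a -> focus_ok n a ->
      terminates n X pc.+1 (exec_basic a s).2 s' -> terminates n X pc s s'
  | T_ptest pc a s s' :
      0 < pc <= size X -> nth Term X pc.-1 = PTest a -> focus_ok n a ->
      terminates n X (if (exec_basic a s).1 then pc.+1 else pc.+2)
        (exec_basic a s).2 s' ->
      terminates n X pc s s'
  | T_ntest pc a s s' :
      0 < pc <= size X -> nth Term X pc.-1 = NTest a -> focus_ok n a ->
      terminates n X (if (exec_basic a s).1 then pc.+2 else pc.+1)
        (exec_basic a s).2 s' ->
      terminates n X pc s s'.

Definition init_regs (n : nat) (bs : n.-tuple bool) : regs :=
  fun f => match f with
           | FIn j => if (1 <= j <= n) then nth false bs j.-1 else false
           | _ => false
           end.

Definition computes (n : nat) (X : instr_seq) (f : n.-tuple bool -> bool) : Prop :=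
  forall bs : n.-tuple bool,
    exists s', terminates n X 1 (init_regs bs) s' /\ s' FOut = f bs.

From mathcomp Require Import all_boot.
Set Implicit Arguments. Unset Strict Implicit.

(* Node j of the circuit is
   held in register in:(j+1) if it is an input and in aux:(j+1) if it is a
   gate.  Every aux register starts at F, so gate k is compiled into a block
   of exactly four instructions that executes aux:(n+k+1).set:T iff the gate
   evaluates to T (and leaves the register at F otherwise); the program ends
   with  +get(output node); out.set:T; !  .  Hence out.set:F never occurs and
   |X| = 4 * #gates + 3 <= 4 * (size C + 1). *)

Definition node_reg (n j : nat) : focus := if j < n then FIn j.+1 else FAux j.+1.

Definition get_of (f : focus) : basic := Basic f MGet.
Definition setT_of (f : focus) : basic := Basic f (MSet true).

Definition gate_code (n m : nat) (g : gate) : seq prim :=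
  match g with
  | GNot a => [:: NTest (get_of (node_reg n a)); Plain (setT_of (FAux m.+1));
                 Jump 1; Jump 1]
  | GOr a b => [:: PTest (get_of (node_reg n a)); Jump 2;
                  PTest (get_of (node_reg n b)); Plain (setT_of (FAux m.+1))]
  | GAnd a b => [:: NTest (get_of (node_reg n a)); Jump 3;
                   PTest (get_of (node_reg n b)); Plain (setT_of (FAux m.+1))]
  end.

(* Copy node o into out (which is F beforehand) and terminate. *)
Definition final_code (n o : nat) : seq prim :=
  [:: PTest (get_of (node_reg n o)); Plain (setT_of FOut); Term].

(* The gates gs, the first of which is node m, followed by the final block. *)
Fixpoint gates_prog (n o m : nat) (gs : seq gate) : seq prim :=
  if gs is g :: gs' then gate_code n m g ++ gates_prog n o m.+1 gs'
  else final_code n o.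

Definition circuit_prog (n : nat) (C : circuit) : instr_seq :=
  gates_prog n (out_node C) n (gates C).

Definition set_if (b : bool) (f : focus) (s : regs) : regs :=
  if b then (exec_basic (setT_of f) s).2 else s.

(* Execution step rules, indexed by the 0-based position p (counter p+1). *)
Section Steps.
Variables (n : nat) (X : instr_seq).

Lemma counter_ok p : nth Term X p <> Term -> 0 < p.+1 <= size X.
Proof.
move=> hp /=; rewrite ltnNge; apply/negP => hX.
by apply: hp; apply: nth_default.
Qed.

Lemma step_plain p a s t : nth Term X p = Plain a -> focus_ok n a ->
  terminates n X p.+2 (exec_basic a s).2 t -> terminates n X p.+1 s t.
Proof.
by move=> hp hok ht; apply: (T_plain (pc := p.+1) _ hp hok ht); apply: counter_ok; rewrite hp.
Qed.

Lemma step_ptest p a s t : nth Term X p = PTest a -> focus_ok n a ->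
  terminates n X (if (exec_basic a s).1 then p.+2 else p.+3) (exec_basic a s).2 t ->
  terminates n X p.+1 s t.
Proof.
by move=> hp hok ht; apply: (T_ptest (pc := p.+1) _ hp hok ht); apply: counter_ok; rewrite hp.
Qed.

Lemma step_ntest p a s t : nth Term X p = NTest a -> focus_ok n a ->
  terminates n X (if (exec_basic a s).1 then p.+3 else p.+2) (exec_basic a s).2 t ->
  terminates n X p.+1 s t.
Proof.
by move=> hp hok ht; apply: (T_ntest (pc := p.+1) _ hp hok ht); apply: counter_ok; rewrite hp.
Qed.

Lemma step_jump p l s t : nth Term X p = Jump l -> 0 < l ->
  terminates n X (p.+1 + l) s t -> terminates n X p.+1 s t.
Proof.
by move=> hp hl ht; apply: (T_jump (pc := p.+1) _ hp hl ht); apply: counter_ok; rewrite hp.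
Qed.

End Steps.

Lemma focus_ok_get n j : focus_ok n (get_of (node_reg n j)).
Proof. by rewrite /node_reg /focus_ok /=; case: ltnP. Qed.

Definition code_at (X : instr_seq) (p : nat) (B : seq prim) : Prop :=
  exists Q, drop p X = B ++ Q.

Lemma code_at_nth X p B i : code_at X p B -> i < size B ->
  nth Term X (p + i) = nth Term B i.
Proof. by case=> Q hX hi; rewrite -nth_drop hX nth_cat hi. Qed.

Lemma code_at_size X p B i : code_at X p B -> i < size B -> p + i < size X.
Proof.
case=> Q hX hi; rewrite -ltn_subRL -size_drop hX size_cat.
exact: leq_trans hi (leq_addr _ _).
Qed.

Lemma gate_block_run n X p m vals bound g s t :
  code_at X p (gate_code n m g) -> gate_wf bound g ->
  (forall j, j < bound -> s (node_reg n j) = nth false vals j) ->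
  terminates n X (p + 4).+1 (set_if (eval_gate vals g) (FAux m.+1) s) t ->
  terminates n X p.+1 s t.
Proof.
move=> hB hwf hread; rewrite addn4 /set_if => ht.
have h0 := code_at_nth (i := 0) hB; have h1 := code_at_nth (i := 1) hB.
have h2 := code_at_nth (i := 2) hB; have h3 := code_at_nth (i := 3) hB.
rewrite addn0 in h0; rewrite addn1 in h1; rewrite addn2 in h2; rewrite addn3 in h3.
case: g hB hwf h0 h1 h2 h3 ht => [a|a b|a b] /= _ hwf h0 h1 h2 h3 ht.
- rewrite -hread // in ht.
  apply: (step_ntest (h0 erefl) (focus_ok_get n a)) => /=.
  case: (s (node_reg n a)) ht => /= ht.
  + apply: (step_jump (h2 erefl)) => //; rewrite addn1.
    by apply: (step_jump (h3 erefl)) => //; rewrite addn1.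
  + apply: (step_plain (h1 erefl)) => //.
    apply: (step_jump (h2 erefl)) => //; rewrite addn1.
    by apply: (step_jump (h3 erefl)) => //; rewrite addn1.
- case/andP: hwf => ha hb; rewrite -hread // -hread // in ht.
  apply: (step_ptest (h0 erefl) (focus_ok_get n a)) => /=.
  case: (s (node_reg n a)) ht => /= ht.
  + apply: (step_jump (h1 erefl)) => //; rewrite addn2.
    exact: (step_plain (h3 erefl)).
  + apply: (step_ptest (h2 erefl) (focus_ok_get n b)) => /=.
    case: (s (node_reg n b)) ht => //= ht.
    exact: (step_plain (h3 erefl)).
- case/andP: hwf => ha hb; rewrite -hread // -hread // in ht.
  apply: (step_ntest (h0 erefl) (focus_ok_get n a)) => /=.
  case: (s (node_reg n a)) ht => /= ht.
  + apply: (step_ptest (h2 erefl) (focus_ok_get n b)) => /=.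
    case: (s (node_reg n b)) ht => //= ht.
    exact: (step_plain (h3 erefl)).
  + by apply: (step_jump (h1 erefl)) => //; rewrite addn3.
Qed.

Lemma final_block_run n X p o s : code_at X p (final_code n o) ->
  exists t, terminates n X p.+1 s t /\ t FOut = s (node_reg n o) || s FOut.
Proof.
move=> hB.
have h0 := code_at_nth (i := 0) hB; have h1 := code_at_nth (i := 1) hB.
have h2 := code_at_nth (i := 2) hB; have hend := code_at_size (i := 2) hB.
rewrite addn0 in h0; rewrite addn1 in h1; rewrite addn2 in h2 hend.
have stop u : terminates n X p.+3 u u.
  by apply: (@T_term n X p.+3); [exact: hend | exact: h2].
case hv: (s (node_reg n o)).
- exists (exec_basic (setT_of FOut) s).2; split => //.
  apply: (step_ptest (h0 erefl) (focus_ok_get n o)); rewrite /= hv.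
  exact: (step_plain (h1 erefl)).
- exists s; split => //.
  by apply: (step_ptest (h0 erefl) (focus_ok_get n o)); rewrite /= hv.
Qed.

Lemma size_gate_code n m g : size (gate_code n m g) = 4.
Proof. by case: g. Qed.

Lemma size_gates_prog n o m gs : size (gates_prog n o m gs) = 4 * size gs + 3.
Proof.
elim: gs m => [|g gs IH] m //=.
by rewrite size_cat size_gate_code IH mulnS addnA.
Qed.

Lemma drop_gates_prog n o m gs k : k <= size gs ->
  drop (4 * k) (gates_prog n o m gs) = gates_prog n o (m + k) (drop k gs).
Proof.
elim: gs m k => [|g gs IH] m [|k] //= hk; rewrite ?drop0 ?addn0 //.
rewrite mulnS addnC -drop_drop (drop_size_cat _ (size_gate_code n m g)).
by rewrite IH // addSnnS.
Qed.

Lemma gate_code_at n o m gs k : k < size gs ->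
  code_at (gates_prog n o m gs) (4 * k) (gate_code n (m + k) (nth (GNot 0) gs k)).
Proof.
move=> hk; rewrite /code_at drop_gates_prog 1?ltnW // (drop_nth (GNot 0) hk).
by exists (gates_prog n o (m + k).+1 (drop k.+1 gs)).
Qed.

Lemma final_code_at n o m gs :
  code_at (gates_prog n o m gs) (4 * size gs) (final_code n o).
Proof. by rewrite /code_at drop_gates_prog // drop_size; exists [::]; rewrite cats0. Qed.

Lemma node_values_prefix inp gs : exists t, node_values inp gs = inp ++ t.
Proof.
elim: gs inp => [|g gs IH] inp /=; first by exists [::]; rewrite cats0.
have [t ->] := IH (rcons inp (eval_gate inp g)).
by exists (eval_gate inp g :: t); rewrite cat_rcons.
Qed.

Lemma size_node_values inp gs : size (node_values inp gs) = size inp + size gs.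
Proof.
elim: gs inp => [|g gs IH] inp /=; first by rewrite addn0.
by rewrite IH size_rcons addSnnS.
Qed.

Lemma node_values_input inp gs j : j < size inp ->
  nth false (node_values inp gs) j = nth false inp j.
Proof. by move=> hj; have [t ->] := node_values_prefix inp gs; rewrite nth_cat hj. Qed.

Lemma eval_gate_cat vals t g : gate_wf (size vals) g ->
  eval_gate (vals ++ t) g = eval_gate vals g.
Proof.
case: g => [a|a b|a b] /= hwf; rewrite !nth_cat ?hwf //.
all: by case/andP: hwf => -> ->.
Qed.

Lemma node_values_gate inp gs k : k < size gs ->
  gate_wf (size inp + k) (nth (GNot 0) gs k) ->
  nth false (node_values inp gs) (size inp + k) =
  eval_gate (node_values inp gs) (nth (GNot 0) gs k).
Proof.
move=> hk; set g := nth (GNot 0) gs k => hwf.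
have hgs : gs = take k gs ++ g :: drop k.+1 gs by rewrite -drop_nth // cat_take_drop.
rewrite hgs /node_values foldl_cat -/(node_values inp (take k gs)) /=.
rewrite -/(node_values _ (drop k.+1 gs)).
set P := node_values inp (take k gs).
have sizeP : size P = size inp + k by rewrite size_node_values size_take hk.
have [t ->] := node_values_prefix (rcons P (eval_gate P g)) (drop k.+1 gs).
rewrite -cats1 -catA nth_cat sizeP ltnn subnn /=.
by rewrite eval_gate_cat // sizeP.
Qed.

(* Simulation invariant after the first k gate blocks: the registers of the
   nodes below n+k hold their values, later aux registers and out are F. *)
Definition simulates (n : nat) (vals : seq bool) (k : nat) (s : regs) : Prop :=
  [/\ forall j, j < n + k -> s (node_reg n j) = nth false vals j,
      forall i, n + k < i -> s (FAux i) = false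
    & s FOut = false].

Lemma node_reg_gate n k : node_reg n (n + k) = FAux (n + k).+1.
Proof. by rewrite /node_reg ltnNge leq_addr. Qed.

Lemma simulates_step n vals k s : simulates n vals k s ->
  simulates n vals k.+1 (set_if (nth false vals (n + k)) (FAux (n + k).+1) s).
Proof.
case=> hnodes haux hout; rewrite /simulates /set_if addnS.
case hv: (nth false vals (n + k)); split => //=.
- move=> j; rewrite ltnS leq_eqVlt => /orP[/eqP -> | hj].
    by rewrite node_reg_gate /= eqxx.
  have -> : focus_eqb (node_reg n j) (FAux (n + k).+1) = false.
    by rewrite /node_reg; case: (j < n) => //=; rewrite eqSS ltn_eqF.
  exact: hnodes.
- by move=> i hi; rewrite gtn_eqF //; apply/haux/ltn_trans/hi.
- move=> j; rewrite ltnS leq_eqVlt => /orP[/eqP -> | hj]; last exact: hnodes.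
  by rewrite node_reg_gate hv; apply: haux.
- by move=> i hi; apply/haux/ltn_trans/hi.
Qed.

Lemma circuit_prog_run n C inp : circuit_wf n C -> size inp = n ->
  forall d k s, size (gates C) = k + d ->
  simulates n (node_values inp (gates C)) k s ->
  exists t, terminates n (circuit_prog n C) (4 * k).+1 s t /\
            t FOut = nth false (node_values inp (gates C)) (out_node C).
Proof.
case/andP=> /allP hwf hout hinp d.
set vals := node_values inp (gates C).
elim: d => [|d IH] k s hk [hnodes haux hFout].
- rewrite addn0 in hk; rewrite -hk.
  have [t [ht htout]] := final_block_run s (final_code_at n (out_node C) n (gates C)).
  by exists t; split; rewrite // htout hFout orbF hnodes // -hk.
- have hkg : k < size (gates C) by rewrite hk -addSnnS leq_addr.
  set g := nth (GNot 0) (gates C) k.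
  have hwfg : gate_wf (n + k) g by apply: hwf; rewrite mem_iota.
  have hval : eval_gate vals g = nth false vals (n + k).
    by rewrite /vals -hinp node_values_gate // hinp.
  have [t [ht htout]] := IH k.+1 _ (etrans hk (esym (addSnnS k d)))
                           (simulates_step (And3 hnodes haux hFout)).
  exists t; split => //.
  apply: (gate_block_run (gate_code_at n (out_node C) n hkg) hwfg hnodes).
  by rewrite hval -mulnSr.
Qed.

Definition admissible (a : basic) : bool :=
  match bfocus a, bmethod a with
  | FIn i, MGet | FAux i, MGet | FAux i, MSet _ => 0 < i
  | FOut, MSet true => true
  | _, _ => false
  end.

Definition admissible_prim (u : prim) : bool :=
  if basic_of u is Some a then admissible a else true.

Lemma admissible_br a : admissible a -> basic_br a.
Proof. by case: a => [[i|i|] [[]|]]. Qed.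

Lemma admissible_not_outF a : admissible a -> a <> out_setF.
Proof. by case: a => [[i|i|] [[]|]] //= _ []. Qed.

Lemma admissible_get n j : admissible (get_of (node_reg n j)).
Proof. by rewrite /node_reg; case: (j < n). Qed.

Lemma gates_prog_admissible n o m gs : all admissible_prim (gates_prog n o m gs).
Proof.
elim: gs m => [|g gs IH] m /=; first by rewrite /admissible_prim /= admissible_get.
rewrite all_cat IH andbT.
by case: g => [a|a b|a b]; rewrite /= /admissible_prim /= !admissible_get.
Qed.

Theorem theorem5 :
  exists c : nat,
    forall (n : nat) (C : circuit),
      circuit_wf n C ->
      exists X : instr_seq,
        X <> [::] /\
        IS_br X /\
        ~ occurs out_setF X /\
        @computes n X (@circuit_fun n C) /\
        size X <= c * (circuit_size n C + 1).
Proof.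
exists 4 => n C hwf; exists (circuit_prog n C).
have hsize := size_gates_prog n (out_node C) n (gates C).
have hadm : all admissible_prim (circuit_prog n C) := gates_prog_admissible _ _ _ _.
have adm_at i a : i < size (circuit_prog n C) ->
    basic_of (nth Term (circuit_prog n C) i) = Some a -> admissible a.
  by move=> hi ha; have := all_nthP Term hadm i hi; rewrite /admissible_prim ha.
split; [|split; [|split; [|split]]].
- by move=> hX; move: hsize; rewrite /circuit_prog in hX; rewrite hX addn3.
- by move=> i hi a ha; apply/admissible_br/(adm_at i).
- by case=> i [hi ha]; apply: (admissible_not_outF (adm_at i _ hi ha)).
- move=> bs; have hinp : size bs = n by rewrite size_tuple.
  have hinit : simulates n (node_values bs (gates C)) 0 (init_regs bs).
    split => // j; rewrite addn0 => hj.
    by rewrite /node_reg hj /= hj node_values_input // hinp.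
  have [t [ht htout]] := circuit_prog_run hwf hinp (esym (add0n _)) hinit.
  by exists t.
- rewrite /circuit_prog hsize /circuit_size mulnDr muln1 leq_add //.
  by rewrite mulnDr leq_addl.
Qed.
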